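(* Let $R$ be a commutative ring in which $2$ is invertible, $I$ an ideal of $R$, $m\ge1$, and let $(Q,q)$ be a quadratic space over $R$ of rank $2m-1$ having an ordered basis $\mathcal{B}$ with respect to which the matrix of $\langle\,,\,\rangle$ is $(2)\perp\widetilde{\psi}_{m-1}$. Identify automorphisms of $Q\perp\mathbb{H}(R)$ with matrices in $\mathrm{GL}_{2m+1}(R)$ via the ordered basis $\mathcal{B}$ followed by $x,f$ (with respect to which the form has matrix $(2)\perp\widetilde{\psi}_m$). Then $\mathrm{EO}_{(R,I)}(Q,\mathbb{H}(R))=\mathrm{EO}_{2m+1}(R,I)$.
   Context: For a quadratic form $q$ the bilinear form is $\langle x,y\rangle=q(x+y)-q(x)-q(y)$ (so $\langle x,x\rangle=2q(x)$); a quadratic space is a finitely generated projective module with non-degenerate such form ($z\mapsto\langle z,-\rangle$ an isomorphism onto the dual). $\mathbb{H}(R)=Rx\oplus Rf$ with $q(ax+bf)=ab$; orthogonal sums carry the sum of forms. $\widetilde{\psi}_s=\sum_{i=1}^s(e_{2i-1,2i}+e_{2i,2i-1})$ ($e_{i,j}$ matrix units; $\widetilde\psi_0$ is empty). DSER transformations on $Q\perp\mathbb{H}(P)$ ($\mathbb{H}(P)=P\oplus P^*$, $q(y,g)=g(y)$): for $\alpha:Q\to P$ let $\alpha^*:P^*\to Q$ satisfy $\langle\alpha^*(g),z\rangle=g(\alpha(z))$, $E_\alpha(z,y,g)=(z-\alpha^*(g),y+\alpha(z)-\tfrac12\alpha\alpha^*(g),g)$; for $\beta:Q\to P^*$ let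 $\beta^*:P\to Q$ satisfy $\langle\beta^*(y),z\rangle=\beta(z)(y)$, $E^*_\beta(z,y,g)=(z-\beta^*(y),y,g+\beta(z)-\tfrac12\beta\beta^*(y))$. $\mathrm{EO}_R(Q,\mathbb{H}(P))$ is generated by all $E_\alpha,E^*_\beta$; $\mathrm{EO}_I(Q,\mathbb{H}(P))$ by those with $\alpha(Q)\subseteq IP$, $\beta(Q)\subseteq IP^*$; $\mathrm{EO}_{(R,I)}(Q,\mathbb{H}(P))$ is its normal closure in $\mathrm{EO}_R(Q,\mathbb{H}(P))$. Odd elementary orthogonal group: for $N=2s+1$ and $1\le i\le s$, $F^1_i(\lambda)=I_N+\lambda(e_{1,2i+1}-2e_{2i,1}-\lambda e_{2i,2i+1})$, $F^2_i(\lambda)=I_N+\lambda(e_{1,2i}-2e_{2i+1,1}-\lambda e_{2i+1,2i})$. $\mathrm{EO}_{2s+1}(R)$ is generated by these with $\lambda\in R$, $\mathrm{EO}_{2s+1}(I)$ by those with $\lambda\in I$, and $\mathrm{EO}_{2s+1}(R,I)$ is the normal closure of $\mathrm{EO}_{2s+1}(I)$ in $\mathrm{EO}_{2s+1}(R)$. *)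

From HB Require Import structures.
From mathcomp Require Import all_boot all_order all_algebra.
Unset Printing Implicit Defensive.
Import Order.TTheory GRing.Theory Num.Theory.
Local Open Scope ring_scope.

Section Defs.
Variable R : comUnitRingType.

Inductive gen_grp {n : nat} (S : 'M[R]_n -> Prop) : 'M[R]_n -> Prop :=
| gen_one : gen_grp S 1%:M
| gen_mulS s g : S s -> gen_grp S g -> gen_grp S (s *m g)
| gen_mulSV s g : S s -> gen_grp S g -> gen_grp S (invmx s *m g).

Definition normal_closure {n : nat} (G H : 'M[R]_n -> Prop) : 'M[R]_n -> Prop :=
  gen_grp (fun x => exists g h, G g /\ H h /\ x = g *m h *m invmx g).

(* Indices are 0-based: the paper's e_{p,q} is entry (p-1, q-1). *)
Definition F1 (s i : nat) (l : R) : 'M[R]_((2 * s).+1) :=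
  \matrix_(r, c) (((r : nat) == c)%:R
     + l * ((((r : nat) == 0%N) && ((c : nat) == 2 * i)%N)%:R
            - 2%:R * ((((r : nat) == (2 * i).-1) && ((c : nat) == 0%N)))%:R
            - l * ((((r : nat) == (2 * i).-1) && ((c : nat) == 2 * i)%N))%:R)).

Definition F2 (s i : nat) (l : R) : 'M[R]_((2 * s).+1) :=
  \matrix_(r, c) (((r : nat) == c)%:R
     + l * ((((r : nat) == 0%N) && ((c : nat) == (2 * i).-1))%:R
            - 2%:R * ((((r : nat) == 2 * i)%N && ((c : nat) == 0%N)))%:R
            - l * ((((r : nat) == 2 * i)%N && ((c : nat) == (2 * i).-1)))%:R)).

Definition EO_odd_gens (s : nat) (P : R -> Prop) (M : 'M[R]_((2 * s).+1)) : Prop :=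
  exists i l, [/\ (1 <= i <= s)%N, P l & (M = F1 s i l \/ M = F2 s i l)].

Definition EO_odd (s : nat) := gen_grp (EO_odd_gens s (fun _ => True)).
Definition EO_odd_ideal (s : nat) (I : {pred R}) := gen_grp (EO_odd_gens s (fun l => l \in I)).
Definition EO_odd_rel (s : nat) (I : {pred R}) := normal_closure (EO_odd s) (EO_odd_ideal s I).

(* Q = R^(2m-1) with basis B; Gram matrix of <,> is (2) ⊥ psi_{m-1}.
   Q ⊥ H(R) = R^(2m+1) with ordered basis B, x, f; coordinates (z; y; g). *)
Definition nQ (m : nat) := (2 * m - 1)%N.
Definition idx_x (m : nat) := (2 * m - 1)%N.
Definition idx_f (m : nat) := (2 * m)%N.

(* entry (i,j) (0-based, after the leading (2)) of psi-block *)
Definition psi_entry (i j : nat) : bool :=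
  (odd i && (j == i.+1)) || (odd j && (i == j.+1)).

Definition GQ (m : nat) : 'M[R]_(nQ m) :=
  \matrix_(i, j) (if ((i : nat) == 0%N) && ((j : nat) == 0%N) then 2%:R
                  else (psi_entry i j)%:R).

Definition bilQ {m : nat} (u v : 'cV[R]_(nQ m)) : R := (u^T *m GQ m *m v) 0 0.

Definition qcol {m : nat} (v : 'cV[R]_(nQ m)) (i : 'I_((2 * m).+1)) : R :=
  oapp (fun j : 'I_(nQ m) => v j 0) 0 (insub (i : nat)).
Definition qrow {m : nat} (a : 'rV[R]_(nQ m)) (i : 'I_((2 * m).+1)) : R :=
  oapp (fun j : 'I_(nQ m) => a 0 j) 0 (insub (i : nat)).

(* alpha : Q -> P = R given by z |-> a z, with alpha^*(g) = g w,
   where <w, z> = a z for all z (adjointness).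
   E_alpha(z,y,g) = (z - g w, y + a z - 1/2 (a w) g, g). *)
Definition E_alpha {m : nat} (a : 'rV[R]_(nQ m)) (w : 'cV[R]_(nQ m)) : 'M[R]_((2 * m).+1) :=
  \matrix_(r, c) (((r : nat) == c)%:R
     - (if (c : nat) == idx_f m then qcol w r else 0)
     + (if (r : nat) == idx_x m then
          qrow a c - (if (c : nat) == idx_f m then (2%:R)^-1 * (a *m w) 0 0 else 0)
        else 0)).

(* beta : Q -> P^* = R (identifying g with g(1)), z |-> b z, with
   beta^*(y) = y w where <w, z> = b z for all z.
   E*_beta(z,y,g) = (z - y w, y, g + b z - 1/2 (b w) y). *)
Definition E_beta {m : nat} (b : 'rV[R]_(nQ m)) (w : 'cV[R]_(nQ m)) : 'M[R]_((2 * m).+1) :=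
  \matrix_(r, c) (((r : nat) == c)%:R
     - (if (c : nat) == idx_x m then qcol w r else 0)
     + (if (r : nat) == idx_f m then
          qrow b c - (if (c : nat) == idx_x m then (2%:R)^-1 * (b *m w) 0 0 else 0)
        else 0)).

Definition EOQH_gens (m : nat) (P : R -> Prop) (M : 'M[R]_((2 * m).+1)) : Prop :=
  (exists a w, (forall z, bilQ w z = (a *m z) 0 0) /\
               (forall z : 'cV[R]_(nQ m), P ((a *m z) 0 0)) /\ M = E_alpha a w)
  \/
  (exists b w, (forall z, bilQ w z = (b *m z) 0 0) /\
               (forall z : 'cV[R]_(nQ m), P ((b *m z) 0 0)) /\ M = E_beta b w).

Definition EOQH (m : nat) := gen_grp (EOQH_gens m (fun _ => True)).
Definition EOQH_ideal (m : nat) (I : {pred R}) := gen_grp (EOQH_gens m (fun l => l \in I)).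
Definition EOQH_rel (m : nat) (I : {pred R}) := normal_closure (EOQH m) (EOQH_ideal m I).

End Defs.

(* In the basis B, x, f the space Q ⊥ H(R) is the standard odd quadratic space
   with Gram matrix (2) ⊥ ψ_m, x, f being its last hyperbolic pair. Since H(R) has
   rank one, α ↦ E_α is additive in α, so every E_α (and likewise E*_β) is the
   product of the E_α attached to the coordinates of α. The coordinate of the
   anisotropic vector gives the generator F_m(-λ/2) of EO_{2m+1}; any other
   coordinate gives a long root element 1 - λ e_{p,f} + λ e_{x,q}, where p and q are
   ψ-partners. A long root element is a commutator of F_m(-λ/2) with some F_i(1),
   and conversely F_i(λ) is the conjugate of a long root element by F_m(1) times two
   more long root elements. In both identities the parameter in I stays on the
   ideal side and the conjugating element lies in the absolute group, so each
   generator of one relative group lies in the other; taking I = R first shows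
   that the absolute groups coincide. *)

From HB Require Import structures.
From mathcomp Require Import all_boot all_order all_algebra.
From mathcomp Require Import ring zify.
Import GRing.Theory.
Local Open Scope ring_scope.
Set Implicit Arguments. Unset Strict Implicit.

(** * Generated subgroups and normal closures *)

Section GeneratedGroups.
Variables (R : comUnitRingType) (n : nat).
Implicit Types (S G H T : 'M[R]_n -> Prop) (A B g : 'M[R]_n).

Definition unitmx_set S := forall A, S A -> A \in unitmx.

Definition mx_group T :=
  [/\ T 1%:M, forall A B, T A -> T B -> T (A *m B) & forall A, T A -> T (invmx A)].

Lemma invmx_eq A B : A *m B = 1%:M -> invmx A = B.
Proof.
move=> AB; have [uA _] := mulmx1_unit AB.
by rewrite -[invmx A]mulmx1 -AB mulKmx.
Qed.

Lemma invmxM A B : A \in unitmx -> B \in unitmx ->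
  invmx (A *m B) = invmx B *m invmx A.
Proof.
by move=> uA uB; apply: invmx_eq; rewrite mulmxA -(mulmxA A) mulmxV // mulmx1 mulmxV.
Qed.

Lemma gen_grp_unitmx S : unitmx_set S -> unitmx_set (gen_grp R S).
Proof.
move=> uS A; elim=> [|s g Ss _ ug|s g Ss _ ug]; first exact: unitmx1.
  by rewrite unitmx_mul uS.
by rewrite unitmx_mul unitmx_inv uS.
Qed.

Lemma gen_grp_mul S A B : gen_grp R S A -> gen_grp R S B -> gen_grp R S (A *m B).
Proof.
elim=> [|s g Ss _ IH|s g Ss _ IH] gB; first by rewrite mul1mx.
  by rewrite -mulmxA; apply: gen_mulS => //; apply: IH.
by rewrite -mulmxA; apply: gen_mulSV => //; apply: IH.
Qed.

Lemma gen_grp_gen S A : S A -> gen_grp R S A.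
Proof. by move=> SA; rewrite -[A]mulmx1; apply: gen_mulS => //; apply: gen_one. Qed.

Lemma gen_grp_genV S A : S A -> gen_grp R S (invmx A).
Proof. by move=> SA; rewrite -[invmx A]mulmx1; apply: gen_mulSV => //; apply: gen_one. Qed.

Lemma gen_grp_inv S A : unitmx_set S -> gen_grp R S A -> gen_grp R S (invmx A).
Proof.
move=> uS; elim=> [|s g Ss gg IH|s g Ss gg IH]; first by rewrite invmx1; apply: gen_one.
  rewrite invmxM ?(uS _ Ss) ?(gen_grp_unitmx uS gg) //.
  by apply: gen_grp_mul => //; apply: gen_grp_genV.
rewrite invmxM ?unitmx_inv ?(uS _ Ss) ?(gen_grp_unitmx uS gg) // invmxK.
by apply: gen_grp_mul => //; apply: gen_grp_gen.
Qed.

Lemma gen_grp_group S : unitmx_set S -> mx_group (gen_grp R S).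
Proof.
by move=> uS; split=> [|A B|A]; [apply: gen_one | apply: gen_grp_mul | apply: gen_grp_inv].
Qed.

Lemma gen_grp_min S T : mx_group T -> (forall A, S A -> T A) ->
  forall A, gen_grp R S A -> T A.
Proof.
case=> T1 TM TV sST A; elim=> [//|s g Ss _ IH|s g Ss _ IH]; apply: TM => //.
  exact: sST.
by apply: TV; apply: sST.
Qed.

Lemma conj_mulmx g A B : g \in unitmx ->
  g *m (A *m B) *m invmx g = (g *m A *m invmx g) *m (g *m B *m invmx g).
Proof. by move=> ug; rewrite !mulmxA mulmxKV. Qed.

Lemma conj_invmx g A : g \in unitmx -> A \in unitmx ->
  g *m invmx A *m invmx g = invmx (g *m A *m invmx g).
Proof.
by move=> ug uA; rewrite !invmxM ?invmxK ?mulmxA // ?unitmx_mul ?unitmx_inv ?ug ?uA.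
Qed.

Section NormalClosure.
Variables G H : 'M[R]_n -> Prop.
Hypotheses (groupG : mx_group G) (uG : unitmx_set G) (uH : unitmx_set H).

Lemma normal_closure_group : mx_group (normal_closure R G H).
Proof.
apply: gen_grp_group => A [g [h [Gg [Hh ->]]]].
by rewrite !unitmx_mul unitmx_inv uG // uH.
Qed.

Lemma sub_normal_closure h : H h -> normal_closure R G H h.
Proof.
case: groupG => G1 _ _ Hh; apply: gen_grp_gen; exists 1%:M, h.
by rewrite invmx1 mul1mx mulmx1.
Qed.

Lemma normal_closure_conj g A : G g ->
  normal_closure R G H A -> normal_closure R G H (g *m A *m invmx g).
Proof.
case: groupG => _ GM _ Gg; have ug := uG Gg.
have conjC s : (exists c h, G c /\ H h /\ s = c *m h *m invmx c) ->
    exists c h, G c /\ H h /\ g *m s *m invmx g = c *m h *m invmx c.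
  move=> [c [h [Gc [Hh ->]]]]; exists (g *m c), h; split; first exact: GM.
  split => //.
  by rewrite invmxM ?uG // !mulmxA.
elim=> [|s y Ss _ IH|s y Ss _ IH]; first by rewrite mulmx1 mulmxV //; apply: gen_one.
  by rewrite conj_mulmx //; apply: gen_mulS => //; apply: conjC.
have us : s \in unitmx.
  by case: Ss => [c [h [Gc [Hh ->]]]]; rewrite !unitmx_mul unitmx_inv uG // uH.
by rewrite conj_mulmx // conj_invmx //; apply: gen_mulSV => //; apply: conjC.
Qed.

Lemma normal_closure_mul_conj x x' y : H x -> H x' -> G y ->
  normal_closure R G H (x *m (y *m x' *m invmx y)).
Proof.
move=> Hx Hx' Gy; apply: gen_grp_mul; first exact: sub_normal_closure.
by apply: gen_grp_gen; exists y, x'.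
Qed.

Lemma normal_closure_min (H' : 'M[R]_n -> Prop) :
  (forall h, H' h -> normal_closure R G H h) ->
  forall A, normal_closure R G H' A -> normal_closure R G H A.
Proof.
move=> sH'; apply: gen_grp_min; first exact: normal_closure_group.
by move=> s [g [h [Gg [Hh ->]]]]; apply: normal_closure_conj => //; apply: sH'.
Qed.

Lemma normal_closure_sub_group : (forall h, H h -> G h) ->
  forall A, normal_closure R G H A -> G A.
Proof.
case: groupG => _ GM GV sHG; apply: (gen_grp_min groupG) => s [g [h [Gg [Hh ->]]]].
by apply: (GM); [apply: (GM) => //; apply: sHG | apply: GV].
Qed.

End NormalClosure.

Lemma eq_normal_closure (G1 G2 H : 'M[R]_n -> Prop) : (forall g, G1 g <-> G2 g) ->
  forall A, normal_closure R G1 H A -> normal_closure R G2 H A.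
Proof.
move=> eqG A; elim=> [|s y Ss _ IH|s y Ss _ IH]; first exact: gen_one.
  by apply: gen_mulS => //; case: Ss => [c [h [/eqG Gc [Hh ->]]]]; exists c, h.
by apply: gen_mulSV => //; case: Ss => [c [h [/eqG Gc [Hh ->]]]]; exists c, h.
Qed.

Lemma normal_closure_gen_sub G G' S H : mx_group G -> unitmx_set G -> unitmx_set H ->
  (forall g, G' g <-> G g) -> (forall s, S s -> normal_closure R G H s) ->
  forall A, normal_closure R G' (gen_grp R S) A -> normal_closure R G H A.
Proof.
move=> groupG uG uH eqG sS A /(eq_normal_closure eqG).
apply: normal_closure_min => //; apply: gen_grp_min sS.
exact: normal_closure_group.
Qed.

End GeneratedGroups.

(** * Root elements *)

Ltac mx_expand := rewrite ?mulmxDl ?mulmxDr ?mulmxBl ?mulmxBr ?mulNmx ?mulmxN ?mul1mx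
  ?mulmx1 ?mul0mx ?mulmx0 ?scaler0 -?scalemxAl -?scalemxAr ?mulmxA ?mul_delta_mx_cond.

Ltac eq_ord_simpl := repeat match goal with
  | |- context [?u == ?u] => rewrite eqxx
  | H : is_true (?u != ?v) |- context [?u == ?v] => rewrite (negbTE H)
  | H : is_true (?u != ?v) |- context [?v == ?u] => rewrite (eq_sym v u) (negbTE H)
  end.

(* Products of matrix units are decided by the distinctness hypotheses in the context. *)
Ltac mx_ring := do 6 (mx_expand; eq_ord_simpl; rewrite ?mulr0n ?mulr1n);
  apply/matrixP => r c; rewrite !mxE; ring.

Section RootElements.
Variables (R : comUnitRingType) (n : nat) (o : 'I_n).

Definition short_root (p q : 'I_n) (l : R) : 'M[R]_n :=
  1%:M + l *: delta_mx o q - (2%:R * l) *: delta_mx p o - l ^+ 2 *: delta_mx p q.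

Definition long_root (p q x f : 'I_n) (l : R) : 'M[R]_n :=
  1%:M - l *: delta_mx p f + l *: delta_mx x q.

Definition dser_mx (p q : 'I_n) (A : 'rV[R]_n) (W : 'cV[R]_n) (c : R) : 'M[R]_n :=
  1%:M - W *m delta_mx 0 q + delta_mx p 0 *m A - c *: delta_mx p q.

Lemma short_rootK (p q : 'I_n) l : o != p -> o != q -> p != q ->
  short_root p q l *m short_root p q (- l) = 1%:M.
Proof. by move=> op oq pq; rewrite /short_root; mx_ring. Qed.

Section DistinctIndices.
Variables p q x f : 'I_n.
Hypotheses (o_p : o != p) (o_q : o != q) (o_x : o != x) (o_f : o != f)
  (p_q : p != q) (p_f : p != f) (q_x : q != x) (q_f : q != f) (x_f : x != f).

Lemma short_root_comm a b :
  short_root x f a *m short_root p q b =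
  long_root p q x f (- (2%:R * a * b)) *m short_root p q b *m short_root x f a.
Proof. by rewrite /short_root /long_root; mx_ring. Qed.

Lemma short_root_conj_long_root a b :
  short_root x f a *m long_root p q f x b *m short_root x f (- a) =
  short_root p q (a * b) *m long_root p q x f (- (a ^+ 2 * b)) *m long_root p q f x b.
Proof. by rewrite /short_root /long_root; mx_ring. Qed.

Lemma long_rootK l : long_root p q x f l *m long_root p q x f (- l) = 1%:M.
Proof. by rewrite /long_root; mx_ring. Qed.

End DistinctIndices.

Lemma dser_mxM p q A1 W1 c1 A2 W2 c2 : q != p ->
  delta_mx (0 : 'I_1) q *m W2 = 0 -> A1 *m delta_mx p (0 : 'I_1) = 0 ->
  dser_mx p q A1 W1 c1 *m dser_mx p q A2 W2 c2 =
  dser_mx p q (A1 + A2) (W1 + W2) (c1 + c2 + (A1 *m W2) 0 0).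
Proof.
move=> qp qW2 A1p.
have eW2 (Y : 'cV[R]_n) : Y *m delta_mx 0 q *m W2 = 0 by rewrite -mulmxA qW2 mulmx0.
have eqp (Y : 'cV[R]_n) : Y *m delta_mx 0 q *m delta_mx p (0 : 'I_1) = 0.
  by rewrite -mulmxA mul_delta_mx_cond (negbTE qp) mulr0n mulmx0.
have eA1p (Y : 'cV[R]_n) : Y *m A1 *m delta_mx p (0 : 'I_1) = 0.
  by rewrite -mulmxA A1p mulmx0.
have eA1W2 (Y : 'cV[R]_n) : Y *m A1 *m W2 = (A1 *m W2) 0 0 *: Y.
  by rewrite -mulmxA {1}[A1 *m W2]mx11_scalar mul_mx_scalar.
rewrite /dser_mx -[delta_mx p q](mul_delta_mx (0 : 'I_1)).
do 4 rewrite ?mulmxDl ?mulmxDr ?mulmxBl ?mulmxBr ?mulNmx ?mulmxN ?mul1mx ?mulmx1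
  ?mul0mx ?mulmx0 ?scaler0 -?scalemxAl -?scalemxAr ?mulmxA ?eW2 ?eqp ?eA1p ?eA1W2.
by apply/matrixP => r c; rewrite !mxE !big_ord1 !mxE; ring.
Qed.

End RootElements.

(** * The quadratic space Q ⊥ H(R) *)

Definition partner (j : nat) : nat :=
  if j == 0%N then 0%N else if odd j then j.+1 else j.-1.

Lemma nat_parity j : (exists k, j = (k * 2).+1) \/ (exists k, j = k * 2).
Proof.
have := odd_double_half j; rewrite -muln2; case: (odd j) => /= jE.
  by left; exists j./2; rewrite -[in LHS]jE.
by right; exists j./2; rewrite -[in LHS]jE.
Qed.

Lemma partner_odd k : partner (k * 2).+1 = (k * 2).+2.
Proof. by rewrite /partner /= oddM andbF. Qed.

Lemma partner_even k : partner (k * 2) = (k * 2).-1.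
Proof. by rewrite /partner oddM andbF; case: k. Qed.

Lemma partnerK : involutive partner.
Proof.
move=> j; case: (nat_parity j) => [[k ->]|[[|k] ->]] //.
  by rewrite partner_odd -[(k * 2).+2]/(k.+1 * 2) partner_even.
by rewrite partner_even -[(k.+1 * 2).-1]/((k * 2).+1) partner_odd.
Qed.

Lemma partner_eq0 j : (partner j == 0)%N = (j == 0)%N.
Proof.
by case: (nat_parity j) => [[k ->]|[k ->]]; rewrite ?partner_odd ?partner_even; lia.
Qed.

Lemma partner_lt m j : (j < nQ m)%N -> (partner j < nQ m)%N.
Proof.
rewrite /nQ; case: (nat_parity j) => [[k ->]|[k ->]].
  by rewrite partner_odd; lia.
by rewrite partner_even; lia.
Qed.

Lemma psi_entryE i j : psi_entry i j = (j != 0)%N && (i == partner j).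
Proof.
rewrite /psi_entry; case: (nat_parity i) => [[k ->]|[k ->]];
  case: (nat_parity j) => [[l ->]|[l ->]];
  rewrite ?partner_odd ?partner_even /= ?oddM ?andbF /=; repeat case: eqP => /=; lia.
Qed.

Section QuadraticSpace.
Variables (R : comUnitRingType) (m : nat).
Hypotheses (m_gt0 : (0 < m)%N) (unit2 : (2%:R : R) \is a GRing.unit).
Local Notation nq := (nQ m).
Local Notation n := (2 * m).+1.

Definition partnerQ (j : 'I_nq) : 'I_nq := insubd j (partner j).

Lemma partnerQE (j : 'I_nq) : (partnerQ j : nat) = partner j.
Proof. by rewrite /partnerQ val_insubd partner_lt. Qed.

Lemma partnerQK : involutive partnerQ.
Proof. by move=> j; apply/val_inj; rewrite /= !partnerQE partnerK. Qed.

Lemma partnerQ_eq0 (j : 'I_nq) : ((partnerQ j : nat) == 0%N) = ((j : nat) == 0%N).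
Proof. by rewrite partnerQE partner_eq0. Qed.

Lemma partnerQ0 (j : 'I_nq) : (j : nat) = 0%N -> partnerQ j = j.
Proof. by move=> j0; apply/val_inj; rewrite /= partnerQE j0. Qed.

Lemma partner_bounds (j : 'I_nq) : (j : nat) != 0%N ->
  [/\ (0 < partner j)%N, (partner j < nq)%N & partner j != j].
Proof.
move=> j0; rewrite lt0n partner_eq0 j0 partner_lt //; split=> //.
by rewrite /partner (negbTE j0); case: (odd j); lia.
Qed.

Lemma partnerQ_neq (j : 'I_nq) : (j : nat) != 0%N -> partnerQ j != j.
Proof. by move=> /partner_bounds[_ _]; rewrite -val_eqE /= partnerQE. Qed.

Lemma GQE i j : GQ R m i j =
  if (j : nat) == 0%N then (if (i : nat) == 0%N then 2%:R else 0) else (i == partnerQ j)%:R.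
Proof. by rewrite /GQ mxE psi_entryE -val_eqE /= partnerQE; case: eqP; case: eqP. Qed.

Lemma trmx_mul_GQ (w : 'cV[R]_nq) j :
  (w^T *m GQ R m) 0 j = if (j : nat) == 0%N then 2%:R * w j 0 else w (partnerQ j) 0.
Proof.
rewrite mxE (bigD1 (partnerQ j)) //= big1 ?addr0.
  rewrite GQE !mxE partnerQ_eq0; case: eqP => j0 /=; last by rewrite eqxx mulr1.
  by rewrite partnerQ0 // mulrC.
move=> i /negbTE ij; rewrite GQE ij; case: eqP => j0; last by rewrite mulr0.
case: eqP => i0; last by rewrite mulr0.
by move: ij; rewrite (_ : i = partnerQ j) ?eqxx //; apply/val_inj; rewrite /= partnerQE j0 i0.
Qed.

(* The Gram matrix (2) ⊥ ψ halves the first coordinate and swaps partner coordinates. *)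
Definition adjoint (a : 'rV[R]_nq) : 'cV[R]_nq :=
  \col_j (if (j : nat) == 0%N then 2%:R^-1 * a 0 j else a 0 (partnerQ j)).

Lemma bilQ_adjointP (a : 'rV[R]_nq) (w : 'cV[R]_nq) :
  (forall z, bilQ R w z = (a *m z) 0 0) <-> w = adjoint a.
Proof.
have -> : (forall z, bilQ R w z = (a *m z) 0 0) <-> w^T *m GQ R m = a.
  split=> [wGa|wGa z]; last by rewrite /bilQ wGa.
  apply/matrixP => i j; rewrite (ord1 i); have := wGa (delta_mx j 0).
  by rewrite /bilQ -!colE !mxE.
split=> [<-|->].
  apply/matrixP => i k; rewrite (ord1 k) mxE trmx_mul_GQ.
  case: eqP => i0; first by rewrite mulKr.
  by rewrite trmx_mul_GQ partnerQ_eq0 partnerQK; case: eqP.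
apply/matrixP => i j; rewrite (ord1 i) trmx_mul_GQ !mxE.
case: eqP => j0; first by rewrite mulVKr.
by rewrite partnerQ_eq0 partnerQK; case: eqP.
Qed.

Lemma adjoint_sym (a b : 'rV[R]_nq) : (a *m adjoint b) 0 0 = (b *m adjoint a) 0 0.
Proof.
rewrite !mxE (reindex_inj (can_inj partnerQK)) /=; apply: eq_bigr => j _.
rewrite !mxE partnerQK partnerQ_eq0; case: eqP => j0; last by rewrite mulrC.
by rewrite (partnerQ0 j0); ring.
Qed.

Lemma adjointD (a b : 'rV[R]_nq) : adjoint (a + b) = adjoint a + adjoint b.
Proof. by apply/matrixP => i j; rewrite !mxE; case: eqP => _; rewrite ?mulrDr. Qed.

Lemma adjoint0 : adjoint 0 = 0.
Proof. by apply/matrixP => i j; rewrite !mxE; case: eqP => _; rewrite ?mulr0. Qed.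

Lemma nQ_gt0 : (0 < nq)%N. Proof. by rewrite /nQ; lia. Qed.
Definition q0 : 'I_nq := Ordinal nQ_gt0.

Lemma adjoint_delta0 l :
  adjoint (l *: delta_mx 0 q0) = (2%:R^-1 * l) *: delta_mx q0 0.
Proof.
apply/matrixP => i k; rewrite (ord1 k) !mxE !eqxx /=.
case: eqP => i0; first by rewrite (_ : i = q0) ?eqxx ?mulrA //; apply/val_inj.
have -> : (i == q0) = false by apply/eqP => iq0; apply: i0; rewrite iq0.
have -> : (partnerQ i == q0) = false.
  by apply/eqP => iq0; apply: i0; apply/eqP; rewrite -partnerQ_eq0 iq0.
by rewrite !mulr0.
Qed.

Lemma adjoint_delta (j : 'I_nq) l : (j : nat) != 0%N ->
  adjoint (l *: delta_mx 0 j) = l *: delta_mx (partnerQ j) 0.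
Proof.
move=> j0; apply/matrixP => i k; rewrite (ord1 k) !mxE !eqxx /= andbT.
have -> : (partnerQ i == j) = (i == partnerQ j).
  by apply/eqP/eqP => [<-|->]; rewrite partnerQK.
case: eqP => i0 //.
have -> : (i == j) = false by apply/eqP => ij; move: j0; rewrite -ij i0.
have -> : (i == partnerQ j) = false.
  by apply/eqP => ij; move: j0; rewrite -partnerQ_eq0 -ij i0.
by rewrite !mulr0.
Qed.

Lemma nQ_le : (nq <= n)%N. Proof. by rewrite /nQ; lia. Qed.
Definition widQ (j : 'I_nq) : 'I_n := widen_ord nQ_le j.

Definition ext_row (a : 'rV[R]_nq) : 'rV[R]_n := \row_c qrow R a c.
Definition ext_col (w : 'cV[R]_nq) : 'cV[R]_n := \col_r qcol R w r.

Lemma qrow_widQ a i : qrow R a (widQ i) = a 0 i.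
Proof. by rewrite /qrow /= valK. Qed.

Lemma qcol_widQ w i : qcol R w (widQ i) = w i 0.
Proof. by rewrite /qcol /= valK. Qed.

Lemma qrow_out a (c : 'I_n) : (nq <= c)%N -> qrow R a c = 0.
Proof. by move=> c_ge; rewrite /qrow insubN // -leqNgt. Qed.

Lemma qcol_out w (c : 'I_n) : (nq <= c)%N -> qcol R w c = 0.
Proof. by move=> c_ge; rewrite /qcol insubN // -leqNgt. Qed.

Lemma ext_rowD a b : ext_row (a + b) = ext_row a + ext_row b.
Proof.
by apply/matrixP => i c; rewrite !mxE /qrow; case: insubP => /= *; rewrite ?mxE ?addr0.
Qed.

Lemma ext_colD a b : ext_col (a + b) = ext_col a + ext_col b.
Proof.
by apply/matrixP => i c; rewrite !mxE /qcol; case: insubP => /= *; rewrite ?mxE ?addr0.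
Qed.

Lemma ext_row0 : ext_row 0 = 0.
Proof. by apply/matrixP => i c; rewrite !mxE /qrow; case: insubP => /= *; rewrite ?mxE. Qed.

Lemma ext_col0 : ext_col 0 = 0.
Proof. by apply/matrixP => i c; rewrite !mxE /qcol; case: insubP => /= *; rewrite ?mxE. Qed.

Lemma widQ_eq (c : 'I_n) (k j : 'I_nq) : (k : nat) = c -> (c == widQ j) = (k == j).
Proof. by move=> kc; rewrite -!val_eqE /= kc. Qed.

Lemma ext_row_delta j l : ext_row (l *: delta_mx 0 j) = l *: delta_mx 0 (widQ j).
Proof.
apply/matrixP => i c; rewrite (ord1 i) !mxE /qrow.
case: insubP => [k _ kc|c_ge] /=; first by rewrite !mxE (widQ_eq _ kc).
have -> : (c == widQ j) = false by apply/eqP => cj; move: c_ge; rewrite cj /= ltn_ord.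
by rewrite mulr0.
Qed.

Lemma ext_col_delta j l : ext_col (l *: delta_mx j 0) = l *: delta_mx (widQ j) 0.
Proof.
apply/matrixP => c i; rewrite (ord1 i) !mxE /qcol.
case: insubP => [k _ kc|c_ge] /=; first by rewrite !mxE (widQ_eq _ kc).
have -> : (c == widQ j) = false by apply/eqP => cj; move: c_ge; rewrite cj /= ltn_ord.
by rewrite mulr0.
Qed.

Lemma ext_row_mul_col a w : (ext_row a *m ext_col w) 0 0 = (a *m w) 0 0.
Proof.
rewrite !mxE (bigID (fun c : 'I_n => (c < nq)%N)) /= [X in _ + X]big1 ?addr0.
  rewrite (big_ord_narrow nQ_le); apply: eq_bigr => i _.
  by rewrite !mxE -[widen_ord _ _]/(widQ i) qrow_widQ qcol_widQ.
by move=> c; rewrite -leqNgt => c_ge; rewrite !mxE qcol_out ?mulr0.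
Qed.

Definition ordx : 'I_n := inord (idx_x m).
Definition ordf : 'I_n := inord (idx_f m).

Lemma ordxE : (ordx : nat) = (2 * m - 1)%N.
Proof. by rewrite inordK /idx_x //; lia. Qed.

Lemma ordfE : (ordf : nat) = (2 * m)%N.
Proof. by rewrite inordK. Qed.

Lemma E_alphaE a w :
  E_alpha R a w = dser_mx ordx ordf (ext_row a) (ext_col w) (2%:R^-1 * (a *m w) 0 0).
Proof.
apply/matrixP => r c; rewrite !mxE !big_ord1 !mxE !eqxx /= -!val_eqE /= ordxE ordfE.
by case: (_ == idx_f m); case: (_ == idx_x m) => /=; ring.
Qed.

Lemma E_betaE b w :
  E_beta R b w = dser_mx ordf ordx (ext_row b) (ext_col w) (2%:R^-1 * (b *m w) 0 0).
Proof.
apply/matrixP => r c; rewrite !mxE !big_ord1 !mxE !eqxx /= -!val_eqE /= ordxE ordfE.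
by case: (_ == idx_f m); case: (_ == idx_x m) => /=; ring.
Qed.

Definition dser (p q : 'I_n) (a : 'rV[R]_nq) : 'M[R]_n :=
  dser_mx p q (ext_row a) (ext_col (adjoint a)) (2%:R^-1 * (a *m adjoint a) 0 0).

Lemma dser0 p q : dser p q 0 = 1%:M.
Proof.
by rewrite /dser /dser_mx adjoint0 ext_row0 ext_col0 !(mul0mx, mulmx0) mxE mulr0 scale0r
  !subr0 addr0.
Qed.

Ltac ord_neq := solve [ done | by rewrite eq_sym
  | repeat match goal with x := _ |- _ => subst x end;
    rewrite -val_eqE /= ?partnerQE ?ordxE ?ordfE; unfold nQ in *; lia ].

Section DserDirection.
Variables p q : 'I_n.
Hypotheses (p_ge : (nq <= p)%N) (q_ge : (nq <= q)%N) (qp : q != p).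

Lemma dserD a b : dser p q a *m dser p q b = dser p q (a + b).
Proof.
rewrite /dser dser_mxM //; last first.
- by rewrite -colE; apply/matrixP => i j; rewrite !mxE qrow_out.
- by rewrite -rowE; apply/matrixP => i j; rewrite !mxE qcol_out.
rewrite ext_rowD adjointD ext_colD ext_row_mul_col; congr dser_mx.
have addE (X Y : 'M[R]_1) : (X + Y) 0 0 = X 0 0 + Y 0 0 by rewrite mxE.
rewrite mulmxDl !mulmxDr !addE (adjoint_sym b a).
(* The two cross terms agree by symmetry of the form; halving needs 2 invertible. *)
have halfK (C : R) : C = 2%:R^-1 * (C + C) by rewrite -mulr2n -(mulr_natl C 2) mulKr.
by rewrite [in LHS](halfK ((a *m adjoint b) 0 0)); ring.
Qed.

Lemma dser_unitmx a : dser p q a \in unitmx.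
Proof. by have := dserD a (- a); rewrite subrr dser0 => /mulmx1_unit[]. Qed.

Lemma dser_delta0 l : dser p q (l *: delta_mx 0 q0) = short_root ord0 p q (- (2%:R^-1 * l)).
Proof.
rewrite /dser adjoint_delta0 ext_row_delta ext_col_delta.
have -> : widQ q0 = ord0 by apply/val_inj.
rewrite -scalemxAl -scalemxAr mul_delta_mx !mxE !eqxx /= mulr1.
have op : (ord0 : 'I_n) != p by ord_neq.
have oq : (ord0 : 'I_n) != q by ord_neq.
have pq : p != q by rewrite eq_sym.
rewrite /short_root mulrN mulVKr // /dser_mx.
do 3 (mx_expand; eq_ord_simpl; rewrite ?mulr0n ?mulr1n).
by apply/matrixP => r c; rewrite !mxE; ring.
Qed.

Lemma short_root_dser c : short_root ord0 p q c = dser p q ((- (2%:R * c)) *: delta_mx 0 q0).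
Proof. by rewrite dser_delta0 mulrN opprK mulrA mulVr // mul1r. Qed.

Lemma dser_delta (j : 'I_nq) l : (j : nat) != 0%N ->
  dser p q (l *: delta_mx 0 j) = long_root (widQ (partnerQ j)) (widQ j) p q l.
Proof.
move=> j0; rewrite /dser adjoint_delta // ext_row_delta ext_col_delta.
rewrite -scalemxAl -scalemxAr mul_delta_mx_cond eq_sym (negbTE (partnerQ_neq j0)).
rewrite mulr0n !mxE !mulr0 /dser_mx /long_root scale0r subr0.
by do 2 mx_expand; apply/matrixP => r c; rewrite !mxE; ring.
Qed.

Lemma dser_group_closed (T : 'M[R]_n -> Prop) (P : R -> Prop) : mx_group T ->
  (forall j l, P l -> T (dser p q (l *: delta_mx 0 j))) ->
  forall a : 'rV[R]_nq, (forall j, P (a 0 j)) -> T (dser p q a).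
Proof.
move=> [T1 TM _] T_delta a Pa; rewrite [a in dser p q a]matrix_sum_delta big_ord1.
apply: (big_ind (fun b => T (dser p q b))); first by rewrite dser0.
  by move=> b c Tb Tc; rewrite -dserD; apply: TM.
by move=> j _; apply: T_delta.
Qed.

End DserDirection.

Lemma F1_short_root i l (P Q : 'I_n) : (P : nat) = (2 * i).-1 -> (Q : nat) = (2 * i)%N ->
  F1 R m i l = short_root ord0 P Q l.
Proof. by move=> PE QE; apply/matrixP => r c; rewrite !mxE -!val_eqE /= PE QE; ring. Qed.

Lemma F2_short_root i l (P Q : 'I_n) : (P : nat) = (2 * i).-1 -> (Q : nat) = (2 * i)%N ->
  F2 R m i l = short_root ord0 Q P l.
Proof. by move=> PE QE; apply/matrixP => r c; rewrite !mxE -!val_eqE /= PE QE; ring. Qed.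

Lemma F1_last l : F1 R m m l = short_root ord0 ordx ordf l.
Proof. by apply: F1_short_root; rewrite ?ordxE ?ordfE //; lia. Qed.

Lemma F2_last l : F2 R m m l = short_root ord0 ordf ordx l.
Proof. by apply: F2_short_root; rewrite ?ordxE ?ordfE //; lia. Qed.

Lemma short_root_partner_EO_gen (P : R -> Prop) (j : 'I_nq) l : (j : nat) != 0%N -> P l ->
  EO_odd_gens R m P (short_root ord0 (widQ (partnerQ j)) (widQ j) l).
Proof.
move=> j0 Pl; have j_lt := ltn_ord j; rewrite {2}/nQ in j_lt.
case: (nat_parity j) => [[k jk]|[k jk]].
  exists k.+1, l; split=> //; first lia.
  by right; apply/esym/F2_short_root; rewrite /= ?partnerQE jk ?partner_odd; lia.
exists k, l; split=> //; first by move: j0; rewrite jk; lia.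
by left; apply/esym/F1_short_root; rewrite /= ?partnerQE jk ?partner_even; lia.
Qed.

Lemma F_short_root_partner i l M : (1 <= i)%N -> (i < m)%N ->
  M = F1 R m i l \/ M = F2 R m i l ->
  exists2 j : 'I_nq, (j : nat) != 0%N & M = short_root ord0 (widQ (partnerQ j)) (widQ j) l.
Proof.
move=> i_gt0 i_lt; have i2_lt : (2 * i < nq)%N by rewrite /nQ; lia.
have i21_lt : ((2 * i).-1 < nq)%N by rewrite /nQ; lia.
case=> ->.
  exists (Ordinal i2_lt); first by rewrite /=; lia.
  by apply: F1_short_root; rewrite //= partnerQE /= mulnC partner_even.
exists (Ordinal i21_lt); first by rewrite /=; lia.
apply: F2_short_root; rewrite //= partnerQE /=.
by rewrite (_ : (2 * i).-1 = (i.-1 * 2).+1) ?partner_odd; lia.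
Qed.

Definition hyperbolic_pair (X F : 'I_n) := (X, F) = (ordx, ordf) \/ (X, F) = (ordf, ordx).

Lemma hyperbolic_xf : hyperbolic_pair ordx ordf. Proof. by left. Qed.
Lemma hyperbolic_fx : hyperbolic_pair ordf ordx. Proof. by right. Qed.

Lemma hyperbolic_pair_ge X F : hyperbolic_pair X F -> [/\ (nq <= X)%N, (nq <= F)%N & F != X].
Proof.
by case=> -[-> ->]; split; rewrite ?ordxE ?ordfE /nQ; try lia; ord_neq.
Qed.

Lemma short_root_hyperbolic_gen (P : R -> Prop) X F c : hyperbolic_pair X F -> P c ->
  EO_odd_gens R m P (short_root ord0 X F c).
Proof.
move=> XF Pc; exists m, c; rewrite m_gt0 leqnn; split=> //.
by case: XF => -[-> ->]; [left; rewrite F1_last | right; rewrite F2_last].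
Qed.

Lemma EOQH_gensP (P : R -> Prop) M : EOQH_gens R m P M <->
  exists X F a,
    [/\ hyperbolic_pair X F, forall z : 'cV_nq, P ((a *m z) 0 0) & M = dser X F a].
Proof.
split=> [[[a [w [/bilQ_adjointP -> [Pa ->]]]]|[a [w [/bilQ_adjointP -> [Pa ->]]]]]|].
- by exists ordx, ordf, a; split=> //; [left | rewrite E_alphaE].
- by exists ordf, ordx, a; split=> //; [right | rewrite E_betaE].
move=> [X [F [a [[[-> ->]|[-> ->]] Pa ->]]]].
- by left; exists a, (adjoint a); split; [apply/bilQ_adjointP | rewrite E_alphaE].
- by right; exists a, (adjoint a); split; [apply/bilQ_adjointP | rewrite E_betaE].
Qed.

Lemma row_entryP (P : R -> Prop) (a : 'rV[R]_nq) :
  (forall z : 'cV_nq, P ((a *m z) 0 0)) -> forall j, P (a 0 j).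
Proof. by move=> Pa j; have := Pa (delta_mx j 0); rewrite -colE mxE. Qed.

Lemma short_root_unitmx (p q : 'I_n) (l : R) : ord0 != p -> ord0 != q -> p != q ->
  short_root ord0 p q l \in unitmx.
Proof. by move=> op oq pq; case: (mulmx1_unit (short_rootK l op oq pq)). Qed.

Lemma EO_odd_gens_unitmx (P : R -> Prop) : unitmx_set (EO_odd_gens R m P).
Proof.
move=> M [i [l [/andP[i_gt0 i_le] _ FM]]].
have P_lt : ((2 * i).-1 < n)%N by lia.
have Q_lt : (2 * i < n)%N by lia.
case: FM => ->; [rewrite (@F1_short_root i l (Ordinal P_lt) (Ordinal Q_lt)) //
  | rewrite (@F2_short_root i l (Ordinal P_lt) (Ordinal Q_lt)) //];
  by apply: short_root_unitmx; ord_neq.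
Qed.

Lemma EOQH_gens_unitmx (P : R -> Prop) : unitmx_set (EOQH_gens R m P).
Proof.
move=> M /EOQH_gensP [X [F [a [XF _ ->]]]].
by have [X_ge F_ge FX] := hyperbolic_pair_ge XF; apply: dser_unitmx.
Qed.

Lemma gen_EO_odd_unitmx (P : R -> Prop) : unitmx_set (gen_grp R (EO_odd_gens R m P)).
Proof. exact/gen_grp_unitmx/EO_odd_gens_unitmx. Qed.

Lemma gen_EOQH_unitmx (P : R -> Prop) : unitmx_set (gen_grp R (EOQH_gens R m P)).
Proof. exact/gen_grp_unitmx/EOQH_gens_unitmx. Qed.

Lemma EO_odd_group : mx_group (EO_odd R m).
Proof. exact/gen_grp_group/EO_odd_gens_unitmx. Qed.

Lemma EOQH_group : mx_group (EOQH R m).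
Proof. exact/gen_grp_group/EOQH_gens_unitmx. Qed.

(** * Relative groups *)

Section Relative.
Variable I : {pred R}.
Hypotheses (I0 : 0 \in I) (ID : forall x y, x \in I -> y \in I -> x + y \in I)
  (IM : forall r x, x \in I -> r * x \in I).

Lemma EO_odd_rel_group : mx_group (EO_odd_rel R m I).
Proof. by apply: normal_closure_group; apply: gen_EO_odd_unitmx. Qed.

Lemma EOQH_rel_group : mx_group (EOQH_rel R m I).
Proof. by apply: normal_closure_group; apply: gen_EOQH_unitmx. Qed.

Lemma row_mulmx_ideal (a : 'rV[R]_nq) : (forall j, a 0 j \in I) ->
  forall z : 'cV[R]_nq, (a *m z) 0 0 \in I.
Proof.
move=> Ia z; rewrite mxE; apply: (big_ind (fun x => x \in I)) => // j _.
by rewrite mulrC; apply: IM.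
Qed.

Lemma long_root_EO_rel X F (j : 'I_nq) l : hyperbolic_pair X F -> (j : nat) != 0%N ->
  l \in I -> EO_odd_rel R m I (long_root (widQ (partnerQ j)) (widQ j) X F l).
Proof.
move=> XF j0 lI; have [X_ge F_ge FX] := hyperbolic_pair_ge XF.
have [pj_gt0 pj_lt pj_neq] := partner_bounds j0; have j_lt := ltn_ord j.
set P := widQ (partnerQ j); set Q := widQ j; set y := short_root ord0 P Q (1 : R).
set a := - (2%:R^-1 * l).
have EO_y : EO_odd R m y by apply/gen_grp_gen/short_root_partner_EO_gen.
have uy : y \in unitmx by apply: short_root_unitmx; ord_neq.
have EO_I_XF c : c \in I -> EO_odd_ideal R m I (short_root ord0 X F c).
  by move=> cI; apply/gen_grp_gen/short_root_hyperbolic_gen.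
have comm : short_root ord0 X F a *m y = long_root P Q X F l *m y *m short_root ord0 X F a.
  have -> : l = - (2%:R * a * 1) by rewrite /a mulr1 mulrN opprK mulrA divrr // mul1r.
  by apply: short_root_comm; ord_neq.
have -> : long_root P Q X F l =
    short_root ord0 X F a *m (y *m short_root ord0 X F (- a) *m invmx y).
  rewrite !mulmxA comm -(mulmxA _ (short_root ord0 X F a)) short_rootK ?mulmx1 ?mulmxK //;
    ord_neq.
apply: (normal_closure_mul_conj EO_odd_group) EO_y; apply: EO_I_XF.
  by rewrite /a -mulNr; apply: IM.
by rewrite /a opprK; apply: IM.
Qed.

Lemma dser_delta_EO_rel X F j l : hyperbolic_pair X F -> l \in I ->
  EO_odd_rel R m I (dser X F (l *: delta_mx 0 j)).
Proof.
move=> XF lI; have [X_ge F_ge FX] := hyperbolic_pair_ge XF.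
have [j0|j0] := eqVneq (j : nat) 0%N; last first.
  by rewrite dser_delta //; apply: long_root_EO_rel.
rewrite (_ : j = q0); last exact: val_inj.
rewrite dser_delta0 //; apply: (sub_normal_closure EO_odd_group).
by apply/gen_grp_gen/short_root_hyperbolic_gen; rewrite // -mulNr; apply: IM.
Qed.

Lemma EOQH_gen_EO_rel (P : R -> Prop) : (forall l, P l -> l \in I) ->
  forall M, EOQH_gens R m P M -> EO_odd_rel R m I M.
Proof.
move=> PI M /EOQH_gensP [X [F [a [XF Pa ->]]]].
have [X_ge F_ge FX] := hyperbolic_pair_ge XF.
apply: (dser_group_closed X_ge F_ge FX (P := fun l => l \in I) EO_odd_rel_group).
  by move=> j l; apply: dser_delta_EO_rel.
by move=> j; apply: PI; apply: row_entryP Pa j.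
Qed.

Lemma dser_delta_EOQH_ideal X F j c : hyperbolic_pair X F -> c \in I ->
  EOQH_ideal R m I (dser X F (c *: delta_mx 0 j)).
Proof.
move=> XF cI; apply/gen_grp_gen/EOQH_gensP; exists X, F, (c *: delta_mx 0 j); split=> //.
by apply: row_mulmx_ideal => k; rewrite !mxE mulrC; apply: IM.
Qed.

Lemma short_root_EOQH_rel (j : 'I_nq) l : (j : nat) != 0%N -> l \in I ->
  EOQH_rel R m I (short_root ord0 (widQ (partnerQ j)) (widQ j) l).
Proof.
move=> j0 lI; have [pj_gt0 pj_lt pj_neq] := partner_bounds j0; have j_lt := ltn_ord j.
have [x_ge f_ge fx] := hyperbolic_pair_ge hyperbolic_xf.
set P := widQ (partnerQ j); set Q := widQ j; set y := short_root ord0 ordx ordf (1 : R).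
have EOQ_I_long X F c : hyperbolic_pair X F -> c \in I ->
    EOQH_ideal R m I (long_root P Q X F c).
  move=> XF cI; have [X_ge F_ge FX] := hyperbolic_pair_ge XF.
  by rewrite -dser_delta //; apply: dser_delta_EOQH_ideal.
have EOQ_y : EOQH R m y.
  rewrite /y short_root_dser //; apply/gen_grp_gen/EOQH_gensP.
  by exists ordx, ordf, ((- (2%:R * 1)) *: delta_mx 0 q0); split=> //; apply: hyperbolic_xf.
have conj : y *m long_root P Q ordf ordx l *m short_root ord0 ordx ordf (- 1) =
    short_root ord0 P Q (1 * l) *m long_root P Q ordx ordf (- (1 ^+ 2 * l))
    *m long_root P Q ordf ordx l.
  by apply: short_root_conj_long_root; ord_neq.
rewrite mul1r expr1n mul1r in conj.
have -> : short_root ord0 P Q l = (y *m long_root P Q ordf ordx l *m invmx y)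
    *m long_root P Q ordf ordx (- l) *m long_root P Q ordx ordf (- - l).
  rewrite (invmx_eq (short_rootK 1 _ _ _)) ?conj; try ord_neq.
  rewrite -(mulmxA _ (long_root P Q ordf ordx l)) long_rootK ?mulmx1; try ord_neq.
  by rewrite -mulmxA long_rootK ?mulmx1; ord_neq.
have [_ EOQ_relM _] := EOQH_rel_group.
apply: (EOQ_relM); first apply: (EOQ_relM).
- by apply: gen_grp_gen; exists y, (long_root P Q ordf ordx l); do 2 split=> //;
    apply: EOQ_I_long hyperbolic_fx _.
- apply: (sub_normal_closure EOQH_group); apply: EOQ_I_long hyperbolic_fx _.
  by rewrite -mulN1r; apply: IM.
- apply: (sub_normal_closure EOQH_group); rewrite opprK.
  exact: EOQ_I_long hyperbolic_xf _.
Qed.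

Lemma EO_gen_EOQH_rel (P : R -> Prop) : (forall l, P l -> l \in I) ->
  forall M, EO_odd_gens R m P M -> EOQH_rel R m I M.
Proof.
move=> PI M [i [l [/andP[i_gt0 i_le] /PI lI FM]]].
have [i_lt|m_le] := ltnP i m.
  by have [j j0 ->] := F_short_root_partner i_gt0 i_lt FM; apply: short_root_EOQH_rel.
have im : i = m by apply/eqP; rewrite eqn_leq i_le.
apply: (sub_normal_closure EOQH_group); rewrite im in FM.
have [x_ge f_ge fx] := hyperbolic_pair_ge hyperbolic_xf.
have [_ _ xf] := hyperbolic_pair_ge hyperbolic_fx.
have lI' : - (2%:R * l) \in I by rewrite -mulNr; apply: IM.
case: FM => ->; [rewrite F1_last | rewrite F2_last]; rewrite short_root_dser //.
  exact: dser_delta_EOQH_ideal hyperbolic_xf lI'.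
exact: dser_delta_EOQH_ideal hyperbolic_fx lI'.
Qed.

End Relative.

Lemma EOQH_sub_EO_odd M : EOQH R m M -> EO_odd R m M.
Proof.
apply: (gen_grp_min EO_odd_group) => s gen_s.
apply: (normal_closure_sub_group EO_odd_group (H := EO_odd_ideal R m predT)).
  apply: (gen_grp_min EO_odd_group) => h [i [l [i_bd _ hE]]].
  by apply: gen_grp_gen; exists i, l.
by apply: (EOQH_gen_EO_rel (I := predT)) gen_s.
Qed.

Lemma EO_odd_sub_EOQH M : EO_odd R m M -> EOQH R m M.
Proof.
apply: (gen_grp_min EOQH_group) => s gen_s.
apply: (normal_closure_sub_group EOQH_group (H := EOQH_ideal R m predT)).
  apply: (gen_grp_min EOQH_group) => h /EOQH_gensP [X [F [a [XF _ ->]]]].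
  by apply/gen_grp_gen/EOQH_gensP; exists X, F, a.
by apply: (EO_gen_EOQH_rel (I := predT)) gen_s.
Qed.

Lemma EOQH_eq_EO_odd M : EOQH R m M <-> EO_odd R m M.
Proof. by split; [apply: EOQH_sub_EO_odd | apply: EO_odd_sub_EOQH]. Qed.

Section RelativeEquality.
Variable I : {pred R}.
Hypotheses (I0 : 0 \in I) (ID : forall x y, x \in I -> y \in I -> x + y \in I)
  (IM : forall r x, x \in I -> r * x \in I).

Lemma EOQH_rel_sub_EO_odd_rel M : EOQH_rel R m I M -> EO_odd_rel R m I M.
Proof.
apply: normal_closure_gen_sub; [exact: EO_odd_group | apply: gen_EO_odd_unitmx
  | apply: gen_EO_odd_unitmx | exact: EOQH_eq_EO_odd | ].
exact: EOQH_gen_EO_rel (fun l (lI : l \in I) => lI).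
Qed.

Lemma EO_odd_rel_sub_EOQH_rel M : EO_odd_rel R m I M -> EOQH_rel R m I M.
Proof.
apply: normal_closure_gen_sub; [exact: EOQH_group | apply: gen_EOQH_unitmx
  | apply: gen_EOQH_unitmx | by move=> g; rewrite EOQH_eq_EO_odd | ].
exact: EO_gen_EOQH_rel (fun l (lI : l \in I) => lI).
Qed.

End RelativeEquality.

End QuadraticSpace.

Unset Implicit Arguments.

Theorem mainTheorem6 (R : comUnitRingType) (I : {pred R})
  (I0 : 0 \in I)
  (ID : forall x y, x \in I -> y \in I -> x + y \in I)
  (IM : forall r x, x \in I -> r * x \in I)
  (h2 : (2%:R : R) \is a GRing.unit)
  (m : nat) (hm : (1 <= m)%N) :
  forall M : 'M[R]_((2 * m).+1), EOQH_rel R m I M <-> EO_odd_rel R m I M.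
Proof.
move=> M; split; [exact: EOQH_rel_sub_EO_odd_rel | exact: EO_odd_rel_sub_EOQH_rel].
Qed.
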